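(* Let $\Lambda=\{\lambda_i\}_{i\geq 0}$ be a numerical semigroup with $\lambda_0=0<\lambda_1<\lambda_2<\cdots$, conductor $c=\lambda_k$, and let $i$ be an index with $0\leq i<k$. Then every order-$i$ seed of $\Lambda$ is at most $c+\lambda_{i+1}-\lambda_i-1$. In particular, the number of order-$i$ seeds of $\Lambda$ is at most $\lambda_{i+1}-\lambda_i$.
   Context: A numerical semigroup is a subset $\Lambda\subseteq\mathbb{N}_0$ containing $0$, closed under addition, with finite complement; the elements of $\mathbb{N}_0\setminus\Lambda$ are gaps and their number $g$ is the genus. The elements of $\Lambda$ are enumerated increasingly as $\lambda_0=0<\lambda_1<\lambda_2<\cdots$; then $\lambda_i=i+g$ for all large $i$, $k$ denotes the smallest index with $\lambda_i=i+g$ for all $i\ge k$, and the conductor is $c=\lambda_k=k+g$. For $i\geq 0$ let $\Lambda_i=\Lambda\setminus\{\lambda_1,\dots,\lambda_i\}$ (a numerical semigroup). A generator of a numerical semigroup is a nonzero element that is not the sum of two nonzero elements of the semigroup. An element $\lambda_t$ with $t\geq k$ is an order-$i$ seed of $\Lambda$ (for $0\le i<k$) if $\lambda_t+\lambda_i$ is a generator of $\Lambda_i$. *)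

From mathcomp Require Import all_boot.
Set Implicit Arguments. Unset Strict Implicit. Unset Printing Implicit Defensive.

(* A numerical semigroup: a subset of N containing 0, closed under addition,
   with finite complement (witnessed by a bound past which everything belongs). *)
Record numsg := NumSg {
  nsmem : nat -> bool;
  ns0 : nsmem 0;
  nsD : forall a b, nsmem a -> nsmem b -> nsmem (a + b);
  nsN : nat;
  nsN_ok : forall n, nsN <= n -> nsmem n }.

(* lambda_i : the i-th element (0-indexed, increasing enumeration).  The list
   below contains at least i+1 elements of the semigroup, so the value does not
   depend on the particular bound nsN. *)
Definition lam (L : numsg) (i : nat) : nat :=
  nth 0 [seq x <- iota 0 (nsN L + i.+1) | nsmem L x] i.

(* genus: number of gaps (all gaps are < nsN L) *)
Definition genus (L : numsg) : nat :=
  count (fun x => ~~ nsmem L x) (iota 0 (nsN L)).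

Definition is_kidx (L : numsg) (k : nat) : Prop :=
  (forall j, k <= j -> lam L j = j + genus L) /\
  (forall k', (forall j, k' <= j -> lam L j = j + genus L) -> k <= k').

Definition Lam_i (L : numsg) (i : nat) (x : nat) : bool :=
  nsmem L x && ~~ has (fun j => lam L j == x) (iota 1 i).

Definition generator (M : nat -> bool) (x : nat) : Prop :=
  M x /\ x <> 0 /\
  ~ (exists a b, M a /\ M b /\ a <> 0 /\ b <> 0 /\ a + b = x).

(* lambda_t (t >= k) is an order-i seed if lambda_t + lambda_i is a generator of
   Lambda_i (k is the index of the conductor). *)
Definition is_seed_idx (L : numsg) (k i t : nat) : Prop :=
  k <= t /\ generator (Lam_i L i) (lam L t + lam L i).

Definition is_seed (L : numsg) (k i x : nat) : Prop :=
  exists t, x = lam L t /\ is_seed_idx L k i t.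

From mathcomp Require Import all_boot.
From mathcomp Require Import zify.

Set Implicit Arguments.
Unset Strict Implicit.

(* If a seed lambda_t satisfied lambda_t + lambda_i >= c + lambda_(i+1), then
   lambda_t + lambda_i = lambda_(i+1) + y with y >= c > lambda_i; both summands
   lie in Lambda_i, so lambda_t + lambda_i would not be a generator of Lambda_i.
   Hence every order-i seed lies in the window [c, c + lambda_(i+1) - lambda_i),
   which has lambda_(i+1) - lambda_i elements. *)

Definition elems_lt (L : numsg) (n : nat) : seq nat :=
  [seq x <- iota 0 n | nsmem L x].

Section Enumeration.

Variable L : numsg.

Lemma size_elems_lt j : j < size (elems_lt L (nsN L + j.+1)).
Proof.
rewrite /elems_lt iotaD filter_cat size_cat add0n.
have -> : [seq x <- iota (nsN L) j.+1 | nsmem L x] = iota (nsN L) j.+1.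
  by apply/all_filterP/allP => x; rewrite mem_iota => /andP[/nsN_ok].
by rewrite size_iota; lia.
Qed.

Lemma lamE j n : nsN L + j < n -> lam L j = nth 0 (elems_lt L n) j.
Proof.
move=> ltjn.
have -> : elems_lt L n = elems_lt L (nsN L + j.+1) ++
    [seq x <- iota (nsN L + j.+1) (n - (nsN L + j.+1)) | nsmem L x].
  rewrite /elems_lt -filter_cat.
  rewrite -[iota (nsN L + _) _]/(iota (0 + (nsN L + j.+1)) _) -iotaD.
  by congr filter; congr iota; lia.
by rewrite nth_cat size_elems_lt.
Qed.

Lemma lam_mem j : nsmem L (lam L j).
Proof.
have := mem_nth 0 (size_elems_lt j).
by rewrite /elems_lt mem_filter => /andP[].
Qed.

Lemma lam_lt : {homo lam L : j j' / j < j'}.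
Proof.
move=> j j' ltjj'.
rewrite (@lamE j (nsN L + j'.+1)); last lia.
rewrite (@lamE j' (nsN L + j'.+1)); last lia.
have lt_size := size_elems_lt j'.
apply: (sorted_ltn_nth ltn_trans) => //.
- exact/sorted_filter/iota_ltn_sorted/ltn_trans.
- exact: ltn_trans ltjj' lt_size.
Qed.

Lemma lam_le : {homo lam L : j j' / j <= j'}.
Proof. exact/ltnW_homo/lam_lt. Qed.

Lemma Lam_i_gt i y : lam L i < y -> Lam_i L i y = nsmem L y.
Proof.
move=> ltiy; rewrite /Lam_i; case: (nsmem L y) => //=.
apply/hasPn => j; rewrite mem_iota => /andP[_ ltji]; apply/eqP => eqy.
by have := @lam_le j i; lia.
Qed.

Lemma mem_ge_conductor k y : is_kidx L k -> lam L k <= y -> nsmem L y.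
Proof.
move=> [kidxL _]; rewrite kidxL // => leky.
by have := lam_mem (y - genus L); rewrite kidxL ?subnK //; lia.
Qed.

End Enumeration.

Section Seeds.

Variables (L : numsg) (k i : nat).
Hypotheses (kidxL : is_kidx L k) (ltik : i < k).

Lemma seed_ge_conductor x : is_seed L k i x -> lam L k <= x.
Proof. by case=> t [-> [lekt _]]; exact: lam_le. Qed.

Lemma seed_le x : is_seed L k i x -> x <= lam L k + lam L i.+1 - lam L i - 1.
Proof.
move=> [t [-> [_ [_ [_ not_split]]]]].
have ltci : lam L i < lam L k by exact: lam_lt.
have ltii : lam L i < lam L i.+1 by exact: lam_lt.
rewrite leqNgt; apply/negP => big; apply: not_split.
exists (lam L i.+1), (lam L t + lam L i - lam L i.+1).
rewrite !Lam_i_gt ?lam_mem //; last lia.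
rewrite (mem_ge_conductor kidxL); last lia.
by repeat split => //; lia.
Qed.

Lemma seed_mem_window x :
  is_seed L k i x -> x \in iota (lam L k) (lam L i.+1 - lam L i).
Proof.
move=> seedx; have := seed_le seedx; have := seed_ge_conductor seedx.
have := @lam_lt L i i.+1 (ltnSn i).
by rewrite mem_iota; lia.
Qed.

End Seeds.

Theorem lemma1 (L : numsg) (k i : nat) :
  is_kidx L k -> i < k ->
  (forall x, is_seed L k i x ->
     x <= lam L k + lam L i.+1 - lam L i - 1) /\
  (forall s : seq nat, uniq s -> (forall x, x \in s -> is_seed L k i x) ->
     size s <= lam L i.+1 - lam L i).
Proof.
move=> kidxL ltik; split=> [x|s uniq_s seeds_s]; first exact: seed_le.
rewrite -[lam L i.+1 - _](size_iota (lam L k)).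
by apply: uniq_leq_size => // x /seeds_s; exact: seed_mem_window.
Qed.
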